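(* Let $\mathcal{V}$ be a finite vocabulary, $N\ge 2$, and let $U=(t_1,\dots,t_N)$ be a random sequence with values in $\mathcal{V}^N$ and distribution $P$. Fix $t^*\in\mathcal{V}$ and write $\Pr[t_k=t^*]$ for the probability that the $k$-th token equals $t^*$. (1) (Autoregressive training.) With $\mu_c(t^*,U)=\sum_{k=1}^N(N-k)\mathbf{1}\{t_k=t^*\}$ and $\mu_p(t^*,U)=\sum_{k=1}^N(k-1)\mathbf{1}\{t_k=t^*\}$, $$\frac{\mathbb{E}_P[\mu_c(t^*,U)]}{\mathbb{E}_P[\mu_p(t^*,U)]}=\frac{\sum_{k=1}^N(N-k)\Pr[t_k=t^*]}{\sum_{k=1}^N(k-1)\Pr[t_k=t^*]}$$ (whenever the denominator is nonzero), so that this ratio depends on the positional probabilities $\Pr[t_k=t^*]$. (2) (Bidirectional training.) Let $m_1,\dots,m_N$ be i.i.d. Bernoulli random variables with $\Pr[m_k=1]=\rho$, independent of $U$, and set $$\mu_c(t^*,U,m)=\sum_{k=1}^N\mathbf{1}\{t_k=t^*\}\mathbf{1}\{m_k=0\}\sum_{k'\neq k}\mathbf{1}\{m_{k'}=1\},\qquad \mu_p(t^*,U,m)=\sum_{k=1}^N\mathbf{1}\{t_k=t^*\}\mathbf{1}\{m_k=1\}\sum_{k'\neq k}\mathbf{1}\{m_{k'}=0\}.$$ Then (whenever the expectations are nonzero) $$\frac{\mathbb{E}[\mu_c(t^*,U,m)]}{\mathbb{E}[\mu_p(t^*,U,m)]}=1.$$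
   Context: Interpretation: under autoregressive training a token at position $k$ is used as context for the $N-k$ later tokens and is predicted from the $k-1$ earlier tokens, so $\mu_c$ (resp. $\mu_p$) counts the number of tokens predicted by (resp. used to predict) occurrences of $t^*$. Under bidirectional (masked) training, $m_k=1$ means position $k$ is masked (predicted); a token contributes as context only if it is not masked, and a masked token is predicted from the unmasked ones. Expectations in (2) are over both $U$ and the masks. *)

From mathcomp Require Import all_boot all_order all_algebra.
Set Implicit Arguments. Unset Strict Implicit. Unset Printing Implicit Defensive.
Import Order.TTheory GRing.Theory Num.Theory.
Local Open Scope ring_scope.

Section Defs.
Variables (R : realFieldType) (V : finType) (N : nat).

(* A sequence U = (t_1,...,t_N) in V^N; position k (1-based) is index k-1 : 'I_N. *)
Definition tokseq := {ffun 'I_N -> V}.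
Definition maskseq := {ffun 'I_N -> bool}.

Definition is_distr (P : tokseq -> R) : Prop :=
  (forall u, 0 <= P u) /\ \sum_(u : tokseq) P u = 1.

Definition Expect (P : tokseq -> R) (X : tokseq -> R) : R :=
  \sum_(u : tokseq) P u * X u.

Definition Pr_pos (P : tokseq -> R) (t : V) (k : 'I_N) : R :=
  \sum_(u : tokseq | u k == t) P u.

(* Autoregressive counts; index k : 'I_N is position k+1, so
   N - (k+1) later tokens and (k+1) - 1 = k earlier tokens. *)
Definition mu_c_ar (t : V) (u : tokseq) : R :=
  \sum_(k < N) (N - k.+1)%:R * (u k == t)%:R.
Definition mu_p_ar (t : V) (u : tokseq) : R :=
  \sum_(k < N) k%:R * (u k == t)%:R.

Definition mask_prob (rho : R) (m : maskseq) : R :=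
  \prod_(k < N) (if m k then rho else 1 - rho).

(* Expectation over (U, m) with m independent of U: joint law P(u) * law(m). *)
Definition Expect2 (P : tokseq -> R) (rho : R) (X : tokseq -> maskseq -> R) : R :=
  \sum_(u : tokseq) \sum_(m : maskseq) P u * mask_prob rho m * X u m.

Definition mu_c_bi (t : V) (u : tokseq) (m : maskseq) : R :=
  \sum_(k < N) (u k == t)%:R * (~~ m k)%:R * \sum_(k' < N | k' != k) (m k')%:R.
Definition mu_p_bi (t : V) (u : tokseq) (m : maskseq) : R :=
  \sum_(k < N) (u k == t)%:R * (m k)%:R * \sum_(k' < N | k' != k) (~~ m k')%:R.

End Defs.

(* Part (1) is linearity of expectation: both counts are weighted sums of the
   indicators 1{t_k = t*}, whose expectations are the positional probabilities.
   Part (2) holds for every exchangeable law of the masks, i.i.d. Bernoulli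
   masks being one: swapping positions k and k' shows that "k unmasked and k'
   masked" is as likely as "k masked and k' unmasked", so each pair (k, k')
   contributes equally to E[mu_c] and E[mu_p], whatever the token sequence. *)
From mathcomp Require Import all_boot all_order all_algebra.
From mathcomp Require Import perm.
Set Implicit Arguments. Unset Strict Implicit. Unset Printing Implicit Defensive.
Import Order.TTheory GRing.Theory Num.Theory.
Local Open Scope ring_scope.

Lemma Expect_weighted_count (R : realFieldType) (V : finType) (N : nat)
    (P : {ffun 'I_N -> V} -> R) (t : V) (c : 'I_N -> R) :
  Expect P (fun u => \sum_(k < N) c k * (u k == t)%:R)
  = \sum_(k < N) c k * Pr_pos P t k.
Proof.
rewrite /Expect; under eq_bigr => u _ do rewrite big_distrr /=.
rewrite exchange_big /=; apply: eq_bigr => k _.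
rewrite /Pr_pos big_distrr [RHS]big_mkcond /=; apply: eq_bigr => u _.
by case: (u k == t); rewrite ?mulr1 ?mulr0 // mulrC.
Qed.

Section ExchangeableMasks.
Variables (R : realFieldType) (N : nat).

Definition permute_mask (s : 'S_N) (m : maskseq N) : maskseq N :=
  [ffun i => m (s i)].

Definition exchangeable (Q : maskseq N -> R) : Prop :=
  forall (s : 'S_N) (m : maskseq N), Q (permute_mask s m) = Q m.

Lemma mask_prob_exchangeable (rho : R) : exchangeable (mask_prob rho).
Proof.
move=> s m; rewrite /mask_prob (reindex_inj (@perm_inj _ s^-1)) /=.
by apply: eq_bigr => i _; rewrite ffunE permKV.
Qed.

Variable Q : maskseq N -> R.
Hypothesis Q_exchangeable : exchangeable Q.

Lemma sum_exchangeable_perm (s : 'S_N) (F : maskseq N -> R) :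
  \sum_m Q m * F m = \sum_m Q m * F (permute_mask s m).
Proof.
have permute_maskK : cancel (permute_mask s) (permute_mask s^-1).
  by move=> m; apply/ffunP => i; rewrite !ffunE permKV.
rewrite (reindex_inj (can_inj permute_maskK)) /=.
by apply: eq_bigr => m _; rewrite Q_exchangeable.
Qed.

Lemma sum_exchangeable_unmasked_masked (k k' : 'I_N) :
  \sum_m Q m * ((~~ m k)%:R * (m k')%:R)
  = \sum_m Q m * ((m k)%:R * (~~ m k')%:R).
Proof.
rewrite (sum_exchangeable_perm (tperm k k')); apply: eq_bigr => m _.
by rewrite !ffunE tpermL tpermR [X in _ * X]mulrC.
Qed.

Lemma sum_exchangeable_pairs (a : 'I_N -> R) (f g : maskseq N -> 'I_N -> bool) :
  \sum_m Q m * \sum_(k < N) a k * (f m k)%:R * \sum_(k' < N | k' != k) (g m k')%:R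
  = \sum_(k < N) a k *
      \sum_(k' < N | k' != k) \sum_m Q m * ((f m k)%:R * (g m k')%:R).
Proof.
under eq_bigr => m _ do rewrite big_distrr /=.
rewrite exchange_big /=; apply: eq_bigr => k _.
rewrite exchange_big /= [RHS]big_distrr /=; apply: eq_bigr => m _.
rewrite !big_distrr /=; apply: eq_bigr => k' _.
by rewrite -(mulrA (a k)) mulrCA.
Qed.

Lemma sum_exchangeable_mu_bi (V : finType) (t : V) (u : tokseq V N) :
  \sum_m Q m * mu_c_bi R t u m = \sum_m Q m * mu_p_bi R t u m.
Proof.
rewrite /mu_c_bi /mu_p_bi !sum_exchangeable_pairs.
apply: eq_bigr => k _; congr (_ * _); apply: eq_bigr => k' _.
exact: sum_exchangeable_unmasked_masked.
Qed.

End ExchangeableMasks.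

Lemma Expect2_mu_c_bi_mu_p_bi (R : realFieldType) (V : finType) (N : nat)
    (P : tokseq V N -> R) (rho : R) (t : V) :
  Expect2 P rho (mu_c_bi R t) = Expect2 P rho (mu_p_bi R t).
Proof.
rewrite /Expect2; apply: eq_bigr => u _.
under eq_bigr do rewrite -mulrA; under [RHS]eq_bigr do rewrite -mulrA.
by rewrite -!big_distrr (sum_exchangeable_mu_bi (mask_prob_exchangeable rho)).
Qed.

Theorem proposition4 (R : realFieldType) (V : finType) (N : nat)
  (P : {ffun 'I_N -> V} -> R) (tstar : V) (rho : R) :
  (2 <= N)%N -> is_distr P -> 0 <= rho <= 1 ->
  (* (1) autoregressive training *)
  (Expect P (mu_p_ar R tstar) != 0 ->
     Expect P (mu_c_ar R tstar) / Expect P (mu_p_ar R tstar)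
     = (\sum_(k < N) (N - k.+1)%:R * Pr_pos P tstar k)
       / (\sum_(k < N) k%:R * Pr_pos P tstar k))
  /\
  (* (2) bidirectional (masked) training *)
  (Expect2 P rho (mu_c_bi R tstar) != 0 -> Expect2 P rho (mu_p_bi R tstar) != 0 ->
     Expect2 P rho (mu_c_bi R tstar) / Expect2 P rho (mu_p_bi R tstar) = 1).
Proof.
(* Both identities hold for any weights P and rho and any N. *)
move=> _ _ _; split=> [_ | _ Ep_neq0].
  by rewrite /mu_c_ar /mu_p_ar !Expect_weighted_count.
by rewrite Expect2_mu_c_bi_mu_p_bi divff // -Expect2_mu_c_bi_mu_p_bi.
Qed.
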